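(* Let $H\in C^2(\mathbb{R}^2)$ satisfy (H1) and (H2). Then: (i) $\tilde\tau_H\in C^0(\mathbb{R}^2)$, $\tilde\tau_H(0)=\frac12$, and $\tilde\tau_H(p)\ge\frac12\Big[\frac{\lambda_H(H(p))}{\Lambda_H(H(p))}\Big]^2$ for all $p\ne0$; (ii) if $H^\gamma$ is convex on $H^{-1}([0,R])$ for some $\gamma\in[\frac12,1)$ and $R>0$, then $\tilde\tau_H\ge1-\gamma$ on $H^{-1}([0,R])$.
   Context: Local strong convexity/concavity: for every bounded convex $U\subset\mathbb{R}^2$ there is $\lambda>0$ (resp. $\Lambda>0$) with $H(p)-\frac\lambda2|p|^2$ (resp. $\frac\Lambda2|p|^2-H(p)$) convex on $U$. (H1): $H$ locally strongly convex and locally strongly concave. (H2): $H(0)=\min H=0$. $\lambda_H(R):=\sup_{\epsilon>0}\sup\{\lambda>0: H-\frac\lambda2|p|^2\text{ convex on }H^{-1}([0,R+\epsilon))\}$, $\Lambda_H(R):=\inf_{\epsilon>0}\inf\{\Lambda>0:\frac\Lambda2|p|^2-H\text{ convex on }H^{-1}([0,R+\epsilon))\}$. $\tilde\tau_H(0)=\frac12$ and $\tilde\tau_H(p)=H(p)/\langle[D^2_{pp}H(p)]^{-1}D_pH(p),D_pH(p)\rangle$ for $p\ne0$. *)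

From Stdlib Require Import Reals.
From Coquelicot Require Import Coquelicot.
Open Scope R_scope.

Definition sqn (p : R * R) : R := fst p ^ 2 + snd p ^ 2.

Definition comb (t : R) (p q : R * R) : R * R :=
  (t * fst p + (1 - t) * fst q, t * snd p + (1 - t) * snd q).

Definition pd1 (f : R * R -> R) (p : R * R) : R :=
  Derive (fun t => f (t, snd p)) (fst p).
Definition pd2 (f : R * R -> R) (p : R * R) : R :=
  Derive (fun t => f (fst p, t)) (snd p).

Definition has_partials (f : R * R -> R) : Prop :=
  forall p, ex_derive (fun t => f (t, snd p)) (fst p) /\
            ex_derive (fun t => f (fst p, t)) (snd p).

Definition C2 (f : R * R -> R) : Prop :=
  has_partials f /\ has_partials (pd1 f) /\ has_partials (pd2 f) /\
  forall p, continuous (pd1 (pd1 f)) p /\ continuous (pd2 (pd1 f)) p /\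
            continuous (pd1 (pd2 f)) p /\ continuous (pd2 (pd2 f)) p.

Definition convex_set (U : R * R -> Prop) : Prop :=
  forall p q t, U p -> U q -> 0 <= t <= 1 -> U (comb t p q).

Definition bounded_set (U : R * R -> Prop) : Prop :=
  exists M, forall p, U p -> sqn p <= M.

Definition convex_on (U : R * R -> Prop) (f : R * R -> R) : Prop :=
  forall p q t, U p -> U q -> 0 <= t <= 1 ->
    f (comb t p q) <= t * f p + (1 - t) * f q.

Definition loc_strongly_convex (H : R * R -> R) : Prop :=
  forall U, bounded_set U -> convex_set U ->
    exists lam, 0 < lam /\ convex_on U (fun p => H p - lam / 2 * sqn p).

Definition loc_strongly_concave (H : R * R -> R) : Prop :=
  forall U, bounded_set U -> convex_set U ->
    exists Lam, 0 < Lam /\ convex_on U (fun p => Lam / 2 * sqn p - H p).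

Definition H1 (H : R * R -> R) : Prop :=
  loc_strongly_convex H /\ loc_strongly_concave H.

Definition H2 (H : R * R -> R) : Prop :=
  H (0, 0) = 0 /\ forall p, 0 <= H p.

Definition sublev_lt (H : R * R -> R) (a : R) : R * R -> Prop :=
  fun p => 0 <= H p /\ H p < a.
Definition sublev_le (H : R * R -> R) (a : R) : R * R -> Prop :=
  fun p => 0 <= H p /\ H p <= a.

Definition lambda_H (H : R * R -> R) (r : R) : Rbar :=
  Rbar_lub (fun l => exists eps, 0 < eps /\
    l = Lub_Rbar (fun lam => 0 < lam /\
          convex_on (sublev_lt H (r + eps)) (fun p => H p - lam / 2 * sqn p))).

Definition Lambda_H (H : R * R -> R) (r : R) : Rbar :=
  Rbar_glb (fun l => exists eps, 0 < eps /\
    l = Glb_Rbar (fun Lam => 0 < Lam /\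
          convex_on (sublev_lt H (r + eps)) (fun p => Lam / 2 * sqn p - H p))).

(* <[D^2H(p)]^{-1} DH(p), DH(p)>, with the 2x2 inverse written out
   (Hessian [[a,b],[c,d]], gradient (g1,g2)). *)
Definition inv_hess_quad (H : R * R -> R) (p : R * R) : R :=
  let a := pd1 (pd1 H) p in let b := pd2 (pd1 H) p in
  let c := pd1 (pd2 H) p in let d := pd2 (pd2 H) p in
  let g1 := pd1 H p in let g2 := pd2 H p in
  (d * g1 ^ 2 - (b + c) * g1 * g2 + a * g2 ^ 2) / (a * d - b * c).

Definition tau_tilde (H : R * R -> R) (p : R * R) : R :=
  if Req_EM_T (fst p) 0 then
    (if Req_EM_T (snd p) 0 then 1 / 2 else H p / inv_hess_quad H p)
  else H p / inv_hess_quad H p.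

(* x^g for x >= 0 (with 0^g = 0 for g > 0) *)
Definition powr (x g : R) : R := if Rlt_dec 0 x then Rpower x g else 0.

From Stdlib Require Import Reals Lra Psatz Classical.
From Coquelicot Require Import Coquelicot.
Open Scope R_scope.

(* Local strong convexity on discs makes the Hessian [A = D^2H] positive definite, forces
   [DH(0) = 0] and [<DH(q), q> > 0] for [q <> 0], so [tau_tilde = H det A / <adj A DH, DH>] is a
   quotient of continuous positive functions away from [0].  Near [0], Taylor expansion gives
   [2 H(q) = <A(0) q, q> + o(|q|^2)] and [DH(q) = A(q) q + o(|q|)], hence
   [<A(q)^-1 DH(q), DH(q)> = <A(0) q, q> + o(|q|^2)] and [tau_tilde -> 1/2].

   For (i): on a sublevel set where [H - l/2 |.|^2] and [L/2 |.|^2 - H] are convex,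
   [H(p) >= l/2 |p|^2], [A >= l] and [|DH(p)| <= L |p|] (mean value theorem along [[0, p]] and
   Cauchy-Schwarz for [A <= L]), so [<A^-1 DH, DH> <= L^2 |p|^2 / l]; the bound then passes to
   the supremum over [l] and the infimum over [L].

   For (ii): along the direction [adj A DH(p)] the second derivative of [H^gam] has the sign of
   [(gam - 1) <adj A DH, DH> + H det A], which gives [tau_tilde >= 1 - gam] in the open sublevel
   set; the boundary follows by continuity along the ray from [0]. *)

(** * One-variable calculus *)

Lemma Rmin_pos_bounds (x y : R) :
  0 < x -> 0 < y -> 0 < Rmin x y /\ Rmin x y <= x /\ Rmin x y <= y.
Proof. intros Hx Hy. split; [apply Rmin_pos; assumption|split; [apply Rmin_l|apply Rmin_r]]. Qed.

Lemma is_derive_continuous (f : R -> R) (x l : R) : is_derive f x l -> continuous f x.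
Proof.
  intros Df. apply (ex_derive_continuous (K := R_AbsRing) (V := R_NormedModule)).
  exists l. exact Df.
Qed.

Lemma is_derive_lincomb (f g : R -> R) (x a b df dg : R) :
  is_derive f x df -> is_derive g x dg ->
  is_derive (fun s => a * f s + b * g s) x (a * df + b * dg).
Proof.
  intros Df Dg.
  exact (is_derive_plus _ _ x _ _ (is_derive_scal _ x a _ Df) (is_derive_scal _ x b _ Dg)).
Qed.

Lemma is_derive_sub (f g : R -> R) (x df dg : R) :
  is_derive f x df -> is_derive g x dg -> is_derive (fun s => f s - g s) x (df - dg).
Proof. intros Df Dg. exact (is_derive_minus f g x df dg Df Dg). Qed.

Lemma is_derive_exp_scal_ln (h : R -> R) (t h' gam : R) :
  0 < h t -> is_derive h t h' ->
  is_derive (fun s => exp (gam * ln (h s))) t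
    (exp (gam * ln (h t)) * (gam * (h' / h t))).
Proof.
  intros Hpos Dh.
  auto_derive.
  - repeat split; try exact I; [exists h'; exact Dh|exact Hpos].
  - replace (Derive (fun x => h x) t) with h' by (symmetry; exact (is_derive_unique _ _ _ Dh)).
    field. lra.
Qed.

Lemma derive_le_of_slope_le (g : R -> R) (L C d : R) :
  is_derive g 0 L -> 0 < d ->
  (forall t, 0 < t < d -> g t - g 0 <= t * C) -> L <= C.
Proof.
  intros Hg Hd Hslope.
  apply is_derive_Reals in Hg.
  destruct (Rle_or_lt L C) as [|HLC]; [assumption|exfalso].
  destruct (Hg (L - C) ltac:(lra)) as [del Hdel].
  pose proof (cond_pos del).
  destruct (Rmin_pos_bounds (d / 2) (del / 2)) as (Ht0 & Htd & Htdel); [lra|lra|].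
  set (t := Rmin (d / 2) (del / 2)) in *.
  assert (Ht : 0 < t < d /\ t < del) by lra.
  assert (Habs : Rabs t < del) by (rewrite Rabs_pos_eq; lra).
  specialize (Hdel t ltac:(lra) Habs).
  specialize (Hslope t (proj1 Ht)).
  rewrite Rplus_0_l in Hdel. apply Rabs_def2 in Hdel as [_ Hdel].
  assert ((g t - g 0) / t <= C); [|lra].
  apply Rmult_le_reg_r with t; [lra|]. field_simplify; lra.
Qed.

Definition convex1_on (J : R -> Prop) (k : R -> R) : Prop :=
  forall x y th, J x -> J y -> 0 <= th <= 1 ->
    k (th * x + (1 - th) * y) <= th * k x + (1 - th) * k y.

Lemma convex1_tangent_le (J : R -> Prop) (k : R -> R) (s t l : R) :
  convex1_on J k -> J s -> J t -> is_derive k s l -> l * (t - s) <= k t - k s.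
Proof.
  intros Hk Hs Ht Hd.
  set (g := fun th => k (s + th * (t - s))).
  assert (Hg : is_derive g 0 (l * (t - s))).
  { unfold g. rewrite Rmult_comm.
    apply (is_derive_comp k (fun th => s + th * (t - s))).
    - replace (s + 0 * (t - s)) with s by ring. exact Hd.
    - auto_derive; [exact I|ring]. }
  apply (derive_le_of_slope_le g _ _ 1 Hg); [lra|].
  intros th Hth. unfold g.
  replace (s + th * (t - s)) with (th * t + (1 - th) * s) by ring.
  replace (s + 0 * (t - s)) with s by ring.
  specialize (Hk t s th Ht Hs ltac:(lra)). lra.
Qed.

(* The tangent inequalities at [0] and [t] make [k'] nondecreasing on [[0, d)]. *)
Lemma convex1_second_derive_nonneg (k k' : R -> R) (J : R -> Prop) (d l : R) :
  convex1_on J k -> 0 < d -> (forall t, 0 <= t < d -> J t) ->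
  (forall t, 0 <= t < d -> is_derive k t (k' t)) ->
  is_derive k' 0 l -> 0 <= l.
Proof.
  intros Hk Hd HI Dk Dk'.
  assert (Hmono : forall t, 0 < t < d -> k' 0 <= k' t).
  { intros t Ht.
    pose proof (convex1_tangent_le J k 0 t (k' 0) Hk (HI 0 ltac:(lra)) (HI t ltac:(lra))
                  (Dk 0 ltac:(lra))).
    pose proof (convex1_tangent_le J k t 0 (k' t) Hk (HI t ltac:(lra)) (HI 0 ltac:(lra))
                  (Dk t ltac:(lra))).
    nra. }
  assert (- l <= 0); [|lra].
  apply (derive_le_of_slope_le (fun x => - k' x) (- l) 0 d); [|exact Hd|].
  - exact (is_derive_opp k' 0 l Dk').
  - intros t Ht. specialize (Hmono t Ht). lra.
Qed.

(* The second derivative of [h ^ gam] at [0] is [gam h^(gam-2) ((gam - 1) h'^2 + h h'')]. *)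
Lemma convex_pow_second_order (h h' : R -> R) (h'' gam d : R) :
  0 < gam -> 0 < d -> (forall t, 0 <= t < d -> 0 < h t) ->
  (forall t, 0 <= t < d -> is_derive h t (h' t)) -> is_derive h' 0 h'' ->
  convex1_on (fun t => 0 <= t < d) (fun t => exp (gam * ln (h t))) ->
  0 <= (gam - 1) * h' 0 ^ 2 + h 0 * h''.
Proof.
  intros Hgam Hd Hpos Dh Dh' Hcvx.
  assert (Hh0 : 0 < h 0) by (apply Hpos; lra).
  set (E0 := exp (gam * ln (h 0))).
  assert (HE0 : 0 < E0) by apply exp_pos.
  pose proof (is_derive_exp_scal_ln h 0 (h' 0) gam Hh0 (Dh 0 ltac:(lra))) as DE.
  pose proof (is_derive_div h' h 0 h'' (h' 0) Dh' (Dh 0 ltac:(lra)) ltac:(lra)) as Dq.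
  pose proof (is_derive_mult _ _ 0 _ _ DE (is_derive_scal _ 0 gam _ Dq) Rmult_comm) as Dk'.
  assert (Hk'' : 0 <= plus (mult (E0 * (gam * (h' 0 / h 0))) (gam * (h' 0 / h 0)))
                           (mult E0 (gam * ((h'' * h 0 - h' 0 * h' 0) / h 0 ^ 2)))).
  { apply (convex1_second_derive_nonneg (fun t => exp (gam * ln (h t)))
             (fun t => exp (gam * ln (h t)) * (gam * (h' t / h t))) _ d _ Hcvx Hd);
      [tauto| |exact Dk'].
    intros t Ht. apply is_derive_exp_scal_ln; [apply Hpos|apply Dh]; exact Ht. }
  assert (0 < E0 * gam / h 0 ^ 2)
    by (apply Rdiv_lt_0_compat; [apply Rmult_lt_0_compat; lra|apply pow_lt, Hh0]).
  apply (Rmult_le_reg_l (E0 * gam / h 0 ^ 2)); [assumption|].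
  rewrite Rmult_0_r. eapply Rle_trans; [exact Hk''|].
  right. unfold plus, mult; simpl. field. lra.
Qed.

Lemma abs_sub_le_of_derive_bound (f f' : R -> R) (T K : R) :
  0 <= T -> (forall t, 0 <= t <= T -> is_derive f t (f' t)) ->
  (forall t, 0 <= t <= T -> Rabs (f' t) <= K) -> Rabs (f T - f 0) <= K * T.
Proof.
  intros HT Df Hf'.
  destruct (MVT_gen f 0 T f') as [c [Hc ->]];
    rewrite ?Rmin_left, ?Rmax_right in * by lra.
  - intros x Hx. apply Df. lra.
  - intros x Hx. apply continuity_pt_filterlim, (is_derive_continuous f x (f' x)).
    apply Df. lra.
  - rewrite Rminus_0_r, Rabs_mult, (Rabs_pos_eq T) by lra.
    apply Rmult_le_compat_r; [lra|]. apply Hf'. lra.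
Qed.

Lemma taylor2_abs_le (f f' f'' : R -> R) (K : R) :
  (forall t, 0 <= t <= 1 -> is_derive f t (f' t)) ->
  (forall t, 0 <= t <= 1 -> is_derive f' t (f'' t)) ->
  f' 0 = 0 ->
  (forall t, 0 <= t <= 1 -> Rabs (f'' t) <= K) -> Rabs (f 1 - f 0) <= K.
Proof.
  intros Df Df' Hf'0 Hf''.
  assert (Hf' : forall t, 0 <= t <= 1 -> Rabs (f' t) <= K).
  { intros t Ht.
    assert (Hmvt : Rabs (f' t - f' 0) <= K * t).
    { apply (abs_sub_le_of_derive_bound f' f''); [lra| |]; intros; [apply Df'|apply Hf'']; lra. }
    pose proof (Rabs_pos (f'' 0)). specialize (Hf'' 0 ltac:(lra)).
    rewrite Hf'0, Rminus_0_r in Hmvt. nra. }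
  pose proof (abs_sub_le_of_derive_bound f f' 1 K ltac:(lra) Df Hf'). lra.
Qed.

Lemma continuous_near_between (k : R -> R) (x a b : R) :
  continuous k x -> a < k x < b ->
  exists d, 0 < d /\ forall t, Rabs (t - x) < d -> a < k t < b.
Proof.
  intros Hk Hx.
  destruct (Rmin_pos_bounds (k x - a) (b - k x)) as (He & Hea & Heb); [lra|lra|].
  destruct (proj1 (filterlim_locally k (k x)) Hk (mkposreal _ He)) as [d Hd].
  exists d. split; [apply cond_pos|].
  intros t Ht. specialize (Hd t Ht).
  change (Rabs (k t - k x) < Rmin (k x - a) (b - k x)) in Hd.
  apply Rabs_def2 in Hd. lra.
Qed.

Lemma nonneg_of_forall_small (a c : R) :
  (forall s, 0 < s <= 1 -> - (s * c) <= a) -> 0 <= a.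
Proof.
  intros Ha. destruct (Rle_or_lt 0 a) as [|Hneg]; [assumption|exfalso].
  pose proof (Ha 1 ltac:(lra)).
  destruct (Rmin_pos_bounds 1 (- a / (2 * c))) as (Hs0 & Hs1 & Hsc);
    [lra|apply Rdiv_lt_0_compat; lra|].
  set (s := Rmin 1 (- a / (2 * c))) in *.
  apply (Rmult_le_compat_r c) in Hsc; [|lra].
  replace (- a / (2 * c) * c) with (- a / 2) in Hsc by (field; lra).
  specialize (Ha s (conj Hs0 Hs1)). lra.
Qed.

Lemma lincomb_abs_le (al be c v1 v2 : R) :
  Rabs al <= c -> Rabs be <= c -> Rabs (al * v1 + be * v2) <= c * (Rabs v1 + Rabs v2).
Proof.
  intros Hal Hbe.
  eapply Rle_trans; [apply Rabs_triang|]. rewrite !Rabs_mult.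
  pose proof (Rabs_pos v1). pose proof (Rabs_pos v2).
  rewrite Rmult_plus_distr_l.
  apply Rplus_le_compat; apply Rmult_le_compat_r; assumption.
Qed.

Lemma sq_le_of_abs_le_sum (r c v1 v2 : R) :
  Rabs r <= c * (Rabs v1 + Rabs v2) -> r ^ 2 <= 2 * c ^ 2 * (v1 ^ 2 + v2 ^ 2).
Proof.
  intros Hr.
  rewrite <- (pow2_abs r), <- (pow2_abs v1), <- (pow2_abs v2).
  pose proof (Rabs_pos r). pose proof (Rabs_pos v1). pose proof (Rabs_pos v2).
  pose proof (pow2_ge_0 (c * (Rabs v1 - Rabs v2))).
  apply Rle_trans with ((c * (Rabs v1 + Rabs v2)) ^ 2); [apply pow_incr; lra|nra].
Qed.

Lemma abs_sub_le_of_close (u v w e : R) :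
  Rabs (u - w) <= e -> Rabs (v - w) <= e -> Rabs (u - v) <= 2 * e.
Proof.
  intros Hu Hv. replace (u - v) with ((u - w) - (v - w)) by ring.
  eapply Rle_trans; [apply Rabs_triang|]. rewrite Rabs_Ropp. lra.
Qed.

Lemma two_dot_abs_le (e q1 q2 r1 r2 : R) : 0 < e ->
  Rabs (2 * (q1 * r1 + q2 * r2)) <= e * (q1 ^ 2 + q2 ^ 2) + (r1 ^ 2 + r2 ^ 2) / e.
Proof.
  intros He. apply Rabs_le.
  assert (Hsq : forall s, 0 <= ((e * q1 + s * r1) ^ 2 + (e * q2 + s * r2) ^ 2) / e).
  { intros s. apply Rdiv_le_0_compat; [|exact He].
    apply Rplus_le_le_0_compat; apply pow2_ge_0. }
  assert (E : forall s, s ^ 2 = 1 ->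
            ((e * q1 + s * r1) ^ 2 + (e * q2 + s * r2) ^ 2) / e
            = e * (q1 ^ 2 + q2 ^ 2) + (r1 ^ 2 + r2 ^ 2) / e + s * (2 * (q1 * r1 + q2 * r2))).
  { intros s Hs.
    replace ((e * q1 + s * r1) ^ 2 + (e * q2 + s * r2) ^ 2) with
      (e ^ 2 * (q1 ^ 2 + q2 ^ 2) + 2 * e * s * (q1 * r1 + q2 * r2)
       + s ^ 2 * (r1 ^ 2 + r2 ^ 2)) by ring.
    rewrite Hs. field. lra. }
  pose proof (Hsq 1). pose proof (Hsq (-1)).
  rewrite E in * by ring. split; lra.
Qed.

Lemma half_ratio_close (h Q eta : R) :
  0 < h -> eta <= 1 / 2 -> Rabs (Q - 2 * h) <= 2 * eta * h ->
  Rabs (h / Q - 1 / 2) <= eta.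
Proof.
  intros Hh Heta HQ. apply Rabs_le_between in HQ.
  assert (HQh : h <= Q) by nra.
  replace (h / Q - 1 / 2) with ((2 * h - Q) / (2 * Q)) by (field; lra).
  rewrite Rabs_div by lra. rewrite (Rabs_pos_eq (2 * Q)) by lra.
  apply Rle_div_l; [lra|]. apply Rabs_le. nra.
Qed.

Lemma convex_comb_lt (s t th d : R) :
  s < d -> t < d -> 0 <= th <= 1 -> th * s + (1 - th) * t < d.
Proof.
  intros Hs Ht Hth.
  assert (th * s <= th * Rmax s t) by (apply Rmult_le_compat_l; [lra|apply Rmax_l]).
  assert ((1 - th) * t <= (1 - th) * Rmax s t) by (apply Rmult_le_compat_l; [lra|apply Rmax_r]).
  assert (Rmax s t < d) by (apply Rmax_lub_lt; assumption).
  lra.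
Qed.

Lemma one_sub_le_ratio_of_second_order (gam h N D : R) : 0 < N -> 0 < D ->
  0 <= (gam - 1) * N ^ 2 + h * (D * N) -> 1 - gam <= h / (N / D).
Proof.
  intros HN HD Hsecond.
  replace (h / (N / D)) with (h * D / N) by (field; lra).
  apply (Rmult_le_reg_r N); [exact HN|].
  replace (h * D / N * N) with (h * D) by (field; lra).
  apply (Rmult_le_reg_r N); [exact HN|]. nra.
Qed.

(** * Quadratic forms of symmetric 2x2 matrices *)

(* The quadratic form of the symmetric matrix [[a, b], [b, d]] and that of its
   adjugate [[d, -b], [-b, a]]. *)
Definition qform (a b d v1 v2 : R) : R := a * v1 ^ 2 + 2 * b * v1 * v2 + d * v2 ^ 2.
Definition adj_qform (a b d r1 r2 : R) : R := d * r1 ^ 2 - 2 * b * r1 * r2 + a * r2 ^ 2.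

Section CoerciveForm.
Variables a b d lam : R.
Hypothesis Hlam : 0 < lam.
Hypothesis Hcoer : forall v1 v2, lam * (v1 ^ 2 + v2 ^ 2) <= qform a b d v1 v2.

Lemma qform_det_pos : 0 < a * d - b * b.
Proof.
  pose proof (Hcoer 0 1) as H01. pose proof (Hcoer d (- b)) as Hdb. unfold qform in *.
  assert (0 < lam * (d ^ 2 + (- b) ^ 2)) by (apply Rmult_lt_0_compat; nra).
  nra.
Qed.

(* [w = adj(A) r] satisfies [qform w = det A * adj_qform r]. *)
Lemma adj_qform_coercive (r1 r2 : R) :
  lam * ((d * r1 - b * r2) ^ 2 + (a * r2 - b * r1) ^ 2)
  <= (a * d - b * b) * adj_qform a b d r1 r2.
Proof.
  replace ((a * d - b * b) * adj_qform a b d r1 r2)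
    with (qform a b d (d * r1 - b * r2) (a * r2 - b * r1))
    by (unfold qform, adj_qform; ring).
  apply Hcoer.
Qed.

Lemma adj_qform_nonneg (r1 r2 : R) : 0 <= adj_qform a b d r1 r2.
Proof.
  pose proof qform_det_pos as Hdet. pose proof (adj_qform_coercive r1 r2) as Hw.
  assert (0 <= lam * ((d * r1 - b * r2) ^ 2 + (a * r2 - b * r1) ^ 2))
    by (apply Rmult_le_pos; [lra|apply Rplus_le_le_0_compat; apply pow2_ge_0]).
  apply (Rmult_le_reg_l (a * d - b * b)); [exact Hdet|]. lra.
Qed.

Lemma adj_qform_pos (r1 r2 : R) : (r1, r2) <> (0, 0) -> 0 < adj_qform a b d r1 r2.
Proof.
  intros Hr. pose proof qform_det_pos as Hdet.
  destruct (Rle_lt_or_eq_dec _ _ (adj_qform_nonneg r1 r2)) as [|HN0]; [assumption|].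
  exfalso. pose proof (adj_qform_coercive r1 r2) as Hw. rewrite <- HN0, Rmult_0_r in Hw.
  pose proof (pow2_ge_0 (d * r1 - b * r2)). pose proof (pow2_ge_0 (a * r2 - b * r1)).
  assert (W1 : d * r1 - b * r2 = 0) by (apply Rsqr_0_uniq, Rle_antisym; unfold Rsqr; nra).
  assert (W2 : a * r2 - b * r1 = 0) by (apply Rsqr_0_uniq, Rle_antisym; unfold Rsqr; nra).
  apply Hr. f_equal; apply (Rmult_eq_reg_l (a * d - b * b)); try lra.
  - replace ((a * d - b * b) * r1) with (a * (d * r1 - b * r2) + b * (a * r2 - b * r1)) by ring.
    rewrite W1, W2. ring.
  - replace ((a * d - b * b) * r2) with (b * (d * r1 - b * r2) + d * (a * r2 - b * r1)) by ring.
    rewrite W1, W2. ring.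
Qed.

Lemma adj_qform_div_det_le (r1 r2 : R) :
  adj_qform a b d r1 r2 / (a * d - b * b) <= (r1 ^ 2 + r2 ^ 2) / lam.
Proof.
  pose proof qform_det_pos as Hdet. pose proof (adj_qform_nonneg r1 r2) as HN.
  pose proof (adj_qform_coercive r1 r2) as Hw.
  set (w1 := d * r1 - b * r2) in *. set (w2 := a * r2 - b * r1) in *.
  set (N := adj_qform a b d r1 r2) in *.
  assert (HwN : w1 * r1 + w2 * r2 = N) by (unfold w1, w2, N, adj_qform; ring).
  assert (CS : N ^ 2 <= (w1 ^ 2 + w2 ^ 2) * (r1 ^ 2 + r2 ^ 2)).
  { rewrite <- HwN. pose proof (pow2_ge_0 (w1 * r2 - w2 * r1)). nra. }
  assert (Key : lam * N <= (a * d - b * b) * (r1 ^ 2 + r2 ^ 2)).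
  { destruct (Rle_lt_or_eq_dec _ _ HN) as [HNp|<-]; [|nra].
    apply (Rmult_le_reg_r N); [exact HNp|].
    apply Rle_trans with (lam * ((w1 ^ 2 + w2 ^ 2) * (r1 ^ 2 + r2 ^ 2))); [nra|].
    pose proof (pow2_ge_0 r1). pose proof (pow2_ge_0 r2). nra. }
  apply (Rmult_le_reg_r ((a * d - b * b) * lam)); [nra|].
  unfold Rdiv. field_simplify; lra.
Qed.
End CoerciveForm.

Lemma bilinear_sq_le_qform (a b d w1 w2 p1 p2 : R) : 0 <= a * d - b * b ->
  (a * w1 * p1 + b * (w1 * p2 + w2 * p1) + d * w2 * p2) ^ 2
  <= qform a b d w1 w2 * qform a b d p1 p2.
Proof.
  intros Hdet.
  assert (0 <= (a * d - b * b) * (w1 * p2 - w2 * p1) ^ 2)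
    by (apply Rmult_le_pos; [lra|apply pow2_ge_0]).
  unfold qform. nra.
Qed.

Lemma adj_qform_shift (a b d q1 q2 r1 r2 : R) :
  adj_qform a b d (a * q1 + b * q2 + r1) (b * q1 + d * q2 + r2)
  = (a * d - b * b) * (qform a b d q1 q2 + 2 * (q1 * r1 + q2 * r2)) + adj_qform a b d r1 r2.
Proof. unfold adj_qform, qform. ring. Qed.

Lemma qform_sub_abs_le (a1 b1 d1 a0 b0 d0 e v1 v2 : R) :
  Rabs (a1 - a0) <= e -> Rabs (b1 - b0) <= e -> Rabs (d1 - d0) <= e ->
  Rabs (qform a1 b1 d1 v1 v2 - qform a0 b0 d0 v1 v2) <= 2 * e * (v1 ^ 2 + v2 ^ 2).
Proof.
  intros Ha Hb Hd. apply Rabs_le_between in Ha, Hb, Hd.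
  assert (2 * Rabs (v1 * v2) <= v1 ^ 2 + v2 ^ 2).
  { rewrite Rabs_mult. pose proof (pow2_ge_0 (Rabs v1 - Rabs v2)).
    rewrite <- (pow2_abs v1), <- (pow2_abs v2). nra. }
  assert (Hmixed : Rabs ((b1 - b0) * (v1 * v2)) <= e * Rabs (v1 * v2)).
  { rewrite Rabs_mult. apply Rmult_le_compat_r; [apply Rabs_pos|]. apply Rabs_le. lra. }
  apply Rabs_le_between in Hmixed.
  unfold qform. apply Rabs_le. split; nra.
Qed.

(* With [r] the remainder of a first-order expansion of the gradient, the adjugate form of the
   gradient is [det] times [qform q + 2 q.r] plus [adj_qform r]; each error term is [O(e |q|^2)]. *)
Lemma adj_qform_perturbed_close (a0 b0 d0 a b d q1 q2 r1 r2 h e lam : R) :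
  0 < e <= 1 -> 0 < lam ->
  (forall v1 v2, lam * (v1 ^ 2 + v2 ^ 2) <= qform a b d v1 v2) ->
  Rabs (a - a0) <= e -> Rabs (b - b0) <= e -> Rabs (d - d0) <= e ->
  Rabs (2 * h - qform a0 b0 d0 q1 q2) <= 4 * e * (q1 ^ 2 + q2 ^ 2) ->
  r1 ^ 2 + r2 ^ 2 <= 16 * e ^ 2 * (q1 ^ 2 + q2 ^ 2) ->
  Rabs (adj_qform a b d (a * q1 + b * q2 + r1) (b * q1 + d * q2 + r2) / (a * d - b * b) - 2 * h)
  <= (23 + 16 / lam) * e * (q1 ^ 2 + q2 ^ 2).
Proof.
  intros He Hlam Hcoer Ha Hb Hd Htaylor Hr.
  set (S := q1 ^ 2 + q2 ^ 2) in *.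
  assert (HS : 0 <= S) by (unfold S; pose proof (pow2_ge_0 q1); pose proof (pow2_ge_0 q2); lra).
  pose proof (qform_det_pos a b d lam Hlam Hcoer) as Hdet.
  rewrite adj_qform_shift.
  replace (((a * d - b * b) * (qform a b d q1 q2 + 2 * (q1 * r1 + q2 * r2))
            + adj_qform a b d r1 r2) / (a * d - b * b) - 2 * h)
    with ((qform a b d q1 q2 - qform a0 b0 d0 q1 q2) + 2 * (q1 * r1 + q2 * r2)
          + adj_qform a b d r1 r2 / (a * d - b * b) - (2 * h - qform a0 b0 d0 q1 q2))
    by (field; lra).
  pose proof (qform_sub_abs_le _ _ _ _ _ _ e q1 q2 Ha Hb Hd) as Hq.
  pose proof (two_dot_abs_le e q1 q2 r1 r2 (proj1 He)) as Hdot.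
  pose proof (adj_qform_nonneg a b d lam Hlam Hcoer r1 r2) as HN.
  pose proof (adj_qform_div_det_le a b d lam Hlam Hcoer r1 r2) as HNle.
  fold S in Hq. fold S in Hdot.
  assert (HNdet : 0 <= adj_qform a b d r1 r2 / (a * d - b * b))
    by (apply Rdiv_le_0_compat; lra).
  assert (Hre : (r1 ^ 2 + r2 ^ 2) / e <= 16 * e * S).
  { apply (Rmult_le_reg_r e); [lra|]. field_simplify; [|lra]. nra. }
  assert (Hrl : (r1 ^ 2 + r2 ^ 2) / lam <= 16 * e * S / lam).
  { unfold Rdiv. apply Rmult_le_compat_r; [left; apply Rinv_0_lt_compat, Hlam|]. nra. }
  replace ((23 + 16 / lam) * e * S) with (2 * e * S + (e * S + 16 * e * S) + 16 * e * S / lam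
                                          + 4 * e * S) by (field; lra).
  set (N := adj_qform a b d r1 r2 / (a * d - b * b)) in *.
  set (A := qform a b d q1 q2 - qform a0 b0 d0 q1 q2) in *.
  set (B := 2 * (q1 * r1 + q2 * r2)) in *.
  set (D := 2 * h - qform a0 b0 d0 q1 q2) in *.
  eapply Rle_trans; [apply Rabs_triang|]. rewrite Rabs_Ropp.
  apply Rplus_le_compat; [|exact Htaylor].
  eapply Rle_trans; [apply Rabs_triang|]. rewrite (Rabs_pos_eq N) by exact HNdet.
  apply Rplus_le_compat; [|lra].
  eapply Rle_trans; [apply Rabs_triang|]. lra.
Qed.

(** * Calculus in the plane *)

Section ContinuityAlgebra.
Variable T : UniformSpace.
Variables f g : T -> R.
Variable x : T.
Hypotheses (Hf : continuous f x) (Hg : continuous g x).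

Lemma continuous_add : continuous (fun y => f y + g y) x.
Proof. exact (continuous_plus f g x Hf Hg). Qed.
Lemma continuous_sub : continuous (fun y => f y - g y) x.
Proof. exact (continuous_minus f g x Hf Hg). Qed.
Lemma continuous_mul : continuous (fun y => f y * g y) x.
Proof. exact (continuous_mult f g x Hf Hg). Qed.
Lemma continuous_sq : continuous (fun y => f y ^ 2) x.
Proof.
  eapply continuous_ext; [|exact (continuous_mult f f x Hf Hf)].
  intros y. unfold mult; simpl. ring.
Qed.
Lemma continuous_div : g x <> 0 -> continuous (fun y => f y / g y) x.
Proof.
  intros Hgx. apply (continuous_mult f (fun y => / g y) x Hf).
  apply (continuous_comp g Rinv x Hg). apply continuous_Rinv, Hgx.
Qed.
End ContinuityAlgebra.

Definition differentiable_at (f : R * R -> R) (p : R * R) : Prop :=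
  differentiable_pt_lim (fun x y => f (x, y)) (fst p) (snd p) (pd1 f p) (pd2 f p).

Lemma differentiable_of_continuous_pd1 (f : R * R -> R) :
  has_partials f -> (forall p, continuous (pd1 f) p) -> forall p, differentiable_at f p.
Proof.
  intros Hf Hc [x y]. unfold differentiable_at. simpl.
  apply filterdiff_differentiable_pt_lim.
  eapply filterdiff_ext_lin.
  - apply (is_derive_filterdiff (fun x y => f (x, y)) x y
             (fun u v => pd1 f (u, v)) (pd2 f (x, y))).
    + apply filter_forall. intros [u v].
      apply Derive_correct. exact (proj1 (Hf (u, v))).
    + apply Derive_correct. exact (proj2 (Hf (x, y))).
    + eapply continuous_ext; [|apply (Hc (x, y))]. intros [u v]. reflexivity.
  - intros [u v]. reflexivity.
Qed.

Lemma differentiable_at_continuous (f : R * R -> R) (p : R * R) :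
  differentiable_at f p -> continuous f p.
Proof.
  intros Hd. destruct p as [x y].
  assert (Hc : continuity_2d_pt (fun x y => f (x, y)) x y).
  { apply differentiable_continuity_pt. exists (pd1 f (x, y)), (pd2 f (x, y)). exact Hd. }
  apply continuity_2d_pt_filterlim in Hc.
  eapply filterlim_ext; [|exact Hc]. intros [u v]. reflexivity.
Qed.

Definition line (p v : R * R) (t : R) : R * R :=
  (fst p + t * fst v, snd p + t * snd v).

Lemma line_at_0 (p v : R * R) : line p v 0 = p.
Proof. destruct p; unfold line; simpl; f_equal; ring. Qed.

Lemma line_origin_at_1 (v : R * R) : line (0, 0) v 1 = v.
Proof. destruct v; unfold line; simpl; f_equal; ring. Qed.

Lemma comb_line (p v : R * R) (th s t : R) :
  comb th (line p v s) (line p v t) = line p v (th * s + (1 - th) * t).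
Proof. unfold comb, line; simpl; f_equal; ring. Qed.

Lemma continuous_line (p v : R * R) (t : R) : continuous (line p v) t.
Proof.
  apply (continuous_comp_2 (fun s => fst p + s * fst v) (fun s => snd p + s * snd v)
           (fun a b => (a, b))).
  - eapply is_derive_continuous. auto_derive; [exact I|reflexivity].
  - eapply is_derive_continuous. auto_derive; [exact I|reflexivity].
  - eapply continuous_ext; [|apply continuous_id]. intros [a b]. reflexivity.
Qed.

Definition grad_dot (f : R * R -> R) (x v : R * R) : R :=
  pd1 f x * fst v + pd2 f x * snd v.

Lemma is_derive_line (f : R * R -> R) (p v : R * R) (t : R) :
  differentiable_at f (line p v t) ->
  is_derive (fun s => f (line p v s)) t (grad_dot f (line p v t) v).
Proof.
  intros Hd. apply is_derive_Reals.
  apply (derivable_pt_lim_comp_2d (fun x y => f (x, y))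
           (fun s => fst p + s * fst v) (fun s => snd p + s * snd v)); [exact Hd| |];
    apply is_derive_Reals; auto_derive; solve [exact I | ring].
Qed.

Lemma sqn_nonneg (p : R * R) : 0 <= sqn p.
Proof. unfold sqn. nra. Qed.

Lemma sqn_pos (p : R * R) : p <> (0, 0) -> 0 < sqn p.
Proof.
  intros Hp. destruct p as [x y]. unfold sqn; simpl.
  destruct (Req_dec x 0) as [->|Hx]; [destruct (Req_dec y 0) as [->|Hy]|].
  - contradiction.
  - pose proof (pow2_gt_0 y Hy). nra.
  - pose proof (pow2_gt_0 x Hx). nra.
Qed.

Lemma is_derive_sqn_line (p v : R * R) (t : R) :
  is_derive (fun s => sqn (line p v s)) t
    (2 * ((fst p + t * fst v) * fst v + (snd p + t * snd v) * snd v)).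
Proof. unfold sqn, line; simpl. auto_derive; [exact I|ring]. Qed.

Lemma abs_sub_linear_le_of_grad_close (f : R * R -> R) (q : R * R) (a b c : R) :
  (forall t, 0 <= t <= 1 -> differentiable_at f (line (0, 0) q t)) ->
  (forall t, 0 <= t <= 1 -> Rabs (pd1 f (line (0, 0) q t) - a) <= c /\
                             Rabs (pd2 f (line (0, 0) q t) - b) <= c) ->
  Rabs (f q - f (0, 0) - (a * fst q + b * snd q)) <= c * (Rabs (fst q) + Rabs (snd q)).
Proof.
  intros Hdiff Hclose.
  pose proof (abs_sub_le_of_derive_bound
                (fun t => f (line (0, 0) q t) - t * (a * fst q + b * snd q))
                (fun t => (pd1 f (line (0, 0) q t) - a) * fst q
                          + (pd2 f (line (0, 0) q t) - b) * snd q)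
                1 (c * (Rabs (fst q) + Rabs (snd q))) Rle_0_1) as Hmvt.
  cbv beta in Hmvt. rewrite line_at_0, line_origin_at_1, Rmult_1_r in Hmvt.
  replace (f q - f (0, 0) - (a * fst q + b * snd q)) with
    (f q - 1 * (a * fst q + b * snd q) - (f (0, 0) - 0 * (a * fst q + b * snd q))) by ring.
  apply Hmvt.
  - intros t Ht.
    replace ((pd1 f (line (0, 0) q t) - a) * fst q + (pd2 f (line (0, 0) q t) - b) * snd q)
      with (grad_dot f (line (0, 0) q t) q - (a * fst q + b * snd q))
      by (unfold grad_dot; ring).
    apply is_derive_sub; [apply is_derive_line, Hdiff, Ht|].
    auto_derive; [exact I|ring].
  - intros t Ht. destruct (Hclose t Ht). apply lincomb_abs_le; assumption.
Qed.

Lemma locally_neq_origin (p : R * R) : p <> (0, 0) -> locally p (fun q => q <> (0, 0)).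
Proof.
  intros Hp. destruct p as [p1 p2].
  assert (Hpos : 0 < Rmax (Rabs p1) (Rabs p2)).
  { destruct (Req_dec p1 0) as [->|Hp1].
    - assert (p2 <> 0) by (intros ->; auto).
      eapply Rlt_le_trans; [apply Rabs_pos_lt; eassumption|apply Rmax_r].
    - eapply Rlt_le_trans; [apply Rabs_pos_lt; eassumption|apply Rmax_l]. }
  exists (mkposreal _ Hpos). intros [q1 q2] [B1 B2] E. injection E as -> ->.
  change (Rabs (0 - p1) < Rmax (Rabs p1) (Rabs p2)) in B1.
  change (Rabs (0 - p2) < Rmax (Rabs p1) (Rabs p2)) in B2.
  rewrite Rminus_0_l, Rabs_Ropp in B1, B2.
  destruct (Rle_dec (Rabs p1) (Rabs p2)).
  - rewrite Rmax_right in * by assumption. lra.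
  - rewrite Rmax_left in * by lra. lra.
Qed.

Lemma line_origin_neq (p : R * R) (s : R) :
  p <> (0, 0) -> s <> 0 -> line (0, 0) p s <> (0, 0).
Proof.
  intros Hp Hs E. apply Hp. destruct p as [p1 p2]. unfold line in E; simpl in E.
  injection E as E1 E2. rewrite !Rplus_0_l in *.
  apply Rmult_integral in E1, E2.
  destruct E1 as [ | -> ], E2 as [ | -> ]; solve [contradiction | reflexivity].
Qed.

Lemma continuous_box (f : R * R -> R) (p : R * R) (e : R) : continuous f p -> 0 < e ->
  exists d, 0 < d /\ forall q, Rabs (fst q - fst p) < d -> Rabs (snd q - snd p) < d ->
    Rabs (f q - f p) < e.
Proof.
  intros Hc He.
  destruct (proj1 (filterlim_locally f (f p)) Hc (mkposreal _ He)) as [d Hd].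
  exists d. split; [apply cond_pos|]. intros q Hq1 Hq2. apply (Hd q). split; assumption.
Qed.

Definition disc (M : R) (p : R * R) : Prop := sqn p <= M.

Lemma sqn_comb (t : R) (p q : R * R) :
  0 <= t <= 1 -> sqn (comb t p q) <= t * sqn p + (1 - t) * sqn q.
Proof.
  intros Ht. unfold sqn, comb; simpl.
  assert (0 <= t * (1 - t) * ((fst p - fst q) ^ 2 + (snd p - snd q) ^ 2)).
  { apply Rmult_le_pos; [nra|]. apply Rplus_le_le_0_compat; apply pow2_ge_0. }
  nra.
Qed.

Lemma disc_convex (M : R) : convex_set (disc M).
Proof. intros p q t Hp Hq Ht. unfold disc in *. pose proof (sqn_comb t p q Ht). nra. Qed.

Lemma disc_bounded (M : R) : bounded_set (disc M).
Proof. exists M. intros p Hp. exact Hp. Qed.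

Lemma convex_on_ext (U : R * R -> Prop) (f g : R * R -> R) :
  (forall p, f p = g p) -> convex_on U f -> convex_on U g.
Proof. intros E Hf p q t Hp Hq Ht. rewrite <- !E. apply Hf; assumption. Qed.

Lemma comb_origin (t : R) (p : R * R) : comb t p (0, 0) = line (0, 0) p t.
Proof. unfold comb, line; simpl; f_equal; ring. Qed.

Lemma sqn_line_origin (t : R) (p : R * R) : sqn (line (0, 0) p t) = t ^ 2 * sqn p.
Proof. unfold sqn, line; simpl; ring. Qed.

Lemma sqn_origin : sqn (0, 0) = 0.
Proof. unfold sqn; simpl; ring. Qed.

Lemma line_near_disc (M : R) (x v : R * R) :
  sqn x < M -> exists d, 0 < d /\ forall t, 0 <= t < d -> disc M (line x v t).
Proof.
  intros Hx.
  destruct (continuous_near_between (fun t => sqn (line x v t)) 0 (sqn x - 1) M)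
    as [d [Hd Hnear]].
  - eapply is_derive_continuous, is_derive_sqn_line.
  - rewrite line_at_0. lra.
  - exists d. split; [exact Hd|]. intros t Ht. unfold disc.
    apply Rlt_le, Hnear. rewrite Rminus_0_r, Rabs_pos_eq; lra.
Qed.

Notation hxx f := (pd1 (pd1 f)).
Notation hxy f := (pd2 (pd1 f)).
Notation hyy f := (pd2 (pd2 f)).

Definition hess_form (f : R * R -> R) (x v w : R * R) : R :=
  hxx f x * fst v * fst w + hxy f x * (fst v * snd w + snd v * fst w)
  + hyy f x * snd v * snd w.

Section C2Regularity.
Variable H : R * R -> R.
Hypothesis HC2 : C2 H.

Lemma C2_continuous_hxx (p : R * R) : continuous (hxx H) p.
Proof. destruct HC2 as (_ & _ & _ & Hc). exact (proj1 (Hc p)). Qed.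
Lemma C2_continuous_hxy (p : R * R) : continuous (hxy H) p.
Proof. destruct HC2 as (_ & _ & _ & Hc). exact (proj1 (proj2 (Hc p))). Qed.
Lemma C2_continuous_hyx (p : R * R) : continuous (pd1 (pd2 H)) p.
Proof. destruct HC2 as (_ & _ & _ & Hc). exact (proj1 (proj2 (proj2 (Hc p)))). Qed.
Lemma C2_continuous_hyy (p : R * R) : continuous (hyy H) p.
Proof. destruct HC2 as (_ & _ & _ & Hc). exact (proj2 (proj2 (proj2 (Hc p)))). Qed.

Lemma C2_differentiable_pd1 (p : R * R) : differentiable_at (pd1 H) p.
Proof.
  apply differentiable_of_continuous_pd1; [apply HC2|]. exact C2_continuous_hxx.
Qed.
Lemma C2_differentiable_pd2 (p : R * R) : differentiable_at (pd2 H) p.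
Proof.
  apply differentiable_of_continuous_pd1; [apply HC2|]. exact C2_continuous_hyx.
Qed.
Lemma C2_differentiable (p : R * R) : differentiable_at H p.
Proof.
  apply differentiable_of_continuous_pd1; [apply HC2|].
  intros q. apply differentiable_at_continuous, C2_differentiable_pd1.
Qed.

Lemma C2_continuous (p : R * R) : continuous H p.
Proof. apply differentiable_at_continuous, C2_differentiable. Qed.
Lemma C2_continuous_pd1 (p : R * R) : continuous (pd1 H) p.
Proof. apply differentiable_at_continuous, C2_differentiable_pd1. Qed.
Lemma C2_continuous_pd2 (p : R * R) : continuous (pd2 H) p.
Proof. apply differentiable_at_continuous, C2_differentiable_pd2. Qed.

Lemma C2_schwarz (p : R * R) : pd1 (pd2 H) p = hxy H p.
Proof.
  destruct HC2 as (Hp0 & Hp1 & Hp2 & _). destruct p as [x y].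
  change (Derive (fun z => Derive (fun t => H (z, t)) y) x =
          Derive (fun z => Derive (fun t => H (t, z)) x) y).
  apply (Schwarz (fun u v => H (u, v)) x y).
  - exists (mkposreal 1 Rlt_0_1). intros u v _ _.
    destruct (Hp0 (u, v)), (Hp1 (u, v)), (Hp2 (u, v)). tauto.
  - apply continuity_2d_pt_filterlim.
    eapply filterlim_ext; [|exact (C2_continuous_hyx (x, y))]. intros [u v]. reflexivity.
  - apply continuity_2d_pt_filterlim.
    eapply filterlim_ext; [|exact (C2_continuous_hxy (x, y))]. intros [u v]. reflexivity.
Qed.

Lemma is_derive_C2_line (x v : R * R) (t : R) :
  is_derive (fun s => H (line x v s)) t (grad_dot H (line x v t) v).
Proof. apply is_derive_line, C2_differentiable. Qed.

Lemma is_derive_grad_dot_line (x v w : R * R) (t : R) :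
  is_derive (fun s => grad_dot H (line x v s) w) t (hess_form H (line x v t) v w).
Proof.
  pose proof (is_derive_line _ x v t (C2_differentiable_pd1 (line x v t))) as D1.
  pose proof (is_derive_line _ x v t (C2_differentiable_pd2 (line x v t))) as D2.
  unfold grad_dot in *. rewrite C2_schwarz in D2.
  replace (hess_form H (line x v t) v w) with
    (fst w * (hxx H (line x v t) * fst v + hxy H (line x v t) * snd v)
     + snd w * (hxy H (line x v t) * fst v + hyy H (line x v t) * snd v))
    by (unfold hess_form; ring).
  eapply is_derive_ext; [|exact (is_derive_lincomb _ _ t _ _ _ _ D1 D2)].
  intros s. simpl. ring.
Qed.

Lemma hess_form_nonneg_of_convex (al be : R) (U : R * R -> Prop) (x v : R * R) :
  convex_on U (fun p => al * sqn p + be * H p) ->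
  (exists d, 0 < d /\ forall t, 0 <= t < d -> U (line x v t)) ->
  0 <= 2 * al * sqn v + be * hess_form H x v v.
Proof.
  intros Hc [d [Hd HU]].
  apply (convex1_second_derive_nonneg
           (fun t => al * sqn (line x v t) + be * H (line x v t))
           (fun t => al * (2 * ((fst x + t * fst v) * fst v + (snd x + t * snd v) * snd v))
                     + be * grad_dot H (line x v t) v)
           (fun t => U (line x v t)) d); [| exact Hd | exact HU | |].
  - intros s t th Hs Ht Hth. rewrite <- comb_line. apply Hc; assumption.
  - intros t _. apply is_derive_lincomb; [apply is_derive_sqn_line|apply is_derive_C2_line].
  - replace (2 * al * sqn v + be * hess_form H x v v) with
      (al * (2 * sqn v) + be * hess_form H (line x v 0) v v) by (rewrite line_at_0; ring).
    apply is_derive_lincomb; [|apply is_derive_grad_dot_line].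
    unfold sqn. auto_derive; [exact I|ring].
Qed.
End C2Regularity.

Definition adj_grad (f : R * R -> R) (x : R * R) : R * R :=
  (hyy f x * pd1 f x - hxy f x * pd2 f x, hxx f x * pd2 f x - hxy f x * pd1 f x).

Definition hess_det (f : R * R -> R) (x : R * R) : R :=
  hxx f x * hyy f x - hxy f x * hxy f x.

Definition adj_hess_quad (f : R * R -> R) (x : R * R) : R :=
  adj_qform (hxx f x) (hxy f x) (hyy f x) (pd1 f x) (pd2 f x).

Lemma hess_form_qform (f : R * R -> R) (x : R * R) (v1 v2 : R) :
  hess_form f x (v1, v2) (v1, v2) = qform (hxx f x) (hxy f x) (hyy f x) v1 v2.
Proof. unfold hess_form, qform; simpl. ring. Qed.

Lemma hess_form_sq_le (f : R * R -> R) (x v w : R * R) : 0 <= hess_det f x ->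
  hess_form f x v w ^ 2 <= hess_form f x v v * hess_form f x w w.
Proof.
  intros Hdet. destruct v as [v1 v2], w as [w1 w2]. rewrite !hess_form_qform.
  apply (bilinear_sq_le_qform _ _ _ v1 v2 w1 w2) in Hdet. exact Hdet.
Qed.

Definition hess_close (f : R * R -> R) (e : R) (x y : R * R) : Prop :=
  Rabs (hxx f x - hxx f y) <= e /\ Rabs (hxy f x - hxy f y) <= e /\
  Rabs (hyy f x - hyy f y) <= e.

(** * Suprema and infima of families of sets *)

Section FamilyBounds.
Variables P1 P2 : R -> R -> Prop.

Let lub_family := Rbar_lub (fun x => exists e, 0 < e /\ x = Lub_Rbar (P1 e)).
Let glb_family := Rbar_glb (fun x => exists e, 0 < e /\ x = Glb_Rbar (P2 e)).

Lemma lub_family_le (c : Rbar) :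
  (forall e l, 0 < e -> P1 e l -> Rbar_le l c) -> Rbar_le lub_family c.
Proof.
  intros Hc. unfold lub_family, Rbar_lub.
  destruct (Rbar_ex_lub _) as [u [Hub Hleast]]; simpl.
  apply Hleast. intros x [e [He ->]].
  apply (proj2 (Lub_Rbar_correct (P1 e))). intros l Hl. exact (Hc e l He Hl).
Qed.

Lemma le_lub_family (e l : R) : 0 < e -> P1 e l -> Rbar_le l lub_family.
Proof.
  intros He Hl. unfold lub_family, Rbar_lub.
  destruct (Rbar_ex_lub _) as [u [Hub Hleast]]; simpl.
  apply (Rbar_le_trans (Finite l) (Lub_Rbar (P1 e)) u).
  - apply (proj1 (Lub_Rbar_correct (P1 e))). exact Hl.
  - apply Hub. exists e. auto.
Qed.

Lemma glb_family_ge (c : Rbar) :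
  (forall e L, 0 < e -> P2 e L -> Rbar_le c L) -> Rbar_le c glb_family.
Proof.
  intros Hc. unfold glb_family, Rbar_glb.
  destruct (Rbar_ex_glb _) as [u [Hlb Hgreatest]]; simpl.
  apply Hgreatest. intros x [e [He ->]].
  apply (proj2 (Glb_Rbar_correct (P2 e))). intros L HL. exact (Hc e L He HL).
Qed.

Lemma real_lub_family_nonneg : (forall e l, P1 e l -> 0 < l) -> 0 <= real lub_family.
Proof.
  intros Hpos. destruct lub_family as [lr| |] eqn:Elub; simpl; try apply Rle_refl.
  destruct (Rle_or_lt 0 lr) as [|Hneg]; [assumption|exfalso].
  assert (Hempty : Rbar_le lub_family m_infty).
  { apply lub_family_le. intros e l He Hl. exfalso.
    pose proof (le_lub_family e l He Hl) as Hle. rewrite Elub in Hle. simpl in Hle.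
    pose proof (Hpos e l Hl). lra. }
  rewrite Elub in Hempty. exact Hempty.
Qed.

(* The hypothesis yields [l <= sqrt (2 X) * L] for all admissible [l] and [L], which passes to
   the supremum and the infimum; non-finite values are sent to [0] by [real]. *)
Lemma half_sq_real_ratio_le (X : R) :
  0 < X -> (forall e l, P1 e l -> 0 < l) -> (forall e L, P2 e L -> 0 < L) ->
  (forall e1 e2 l L, 0 < e1 -> 0 < e2 -> P1 e1 l -> P2 e2 L -> 1 / 2 * (l / L) ^ 2 <= X) ->
  1 / 2 * (real lub_family / real glb_family) ^ 2 <= X.
Proof.
  intros HX HP1 HP2 Hratio.
  set (s := sqrt (2 * X)).
  assert (Hs : 0 < s) by (apply sqrt_lt_R0; lra).
  assert (Hss : s * s = 2 * X) by (apply sqrt_sqrt; lra).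
  assert (Hls : forall e1 e2 l L, 0 < e1 -> 0 < e2 -> P1 e1 l -> P2 e2 L -> l <= s * L).
  { intros e1 e2 l L He1 He2 Hl HL.
    pose proof (Hratio e1 e2 l L He1 He2 Hl HL). pose proof (HP1 _ _ Hl). pose proof (HP2 _ _ HL).
    assert (l / L <= s); [|apply (Rmult_le_reg_r (/ L)); [apply Rinv_0_lt_compat; lra|];
                          field_simplify; lra].
    assert (0 < l / L) by (apply Rdiv_lt_0_compat; lra).
    destruct (Rle_or_lt (l / L) s) as [|Hlt]; [assumption|nra]. }
  pose proof real_lub_family_nonneg HP1 as Hlam.
  set (lam := real lub_family) in *.
  assert (Hlam_le : forall e L, 0 < e -> P2 e L -> lam / s <= L).
  { intros e2 L He2 HL. pose proof (HP2 _ _ HL).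
    assert (Hub : Rbar_le lub_family (s * L)).
    { apply lub_family_le. intros e1 l He1 Hl. exact (Hls e1 e2 l L He1 He2 Hl HL). }
    assert (lam <= s * L).
    { unfold lam. destruct lub_family; simpl in *; nra. }
    apply (Rmult_le_reg_l s); [exact Hs|]. field_simplify; lra. }
  assert (Hglb : Rbar_le (lam / s) glb_family).
  { apply glb_family_ge. intros e L He HL. exact (Hlam_le e L He HL). }
  destruct glb_family as [Lr| |]; simpl in *;
    try (unfold Rdiv; rewrite Rinv_0, Rmult_0_r; lra).
  assert (0 <= lam / s) by (apply Rdiv_le_0_compat; lra).
  destruct (Rle_lt_or_eq_dec 0 Lr ltac:(lra)) as [HLr|<-];
    [|unfold Rdiv; rewrite Rinv_0, Rmult_0_r; lra].
  assert (lam / Lr <= s).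
  { apply (Rmult_le_reg_r Lr); [exact HLr|]. field_simplify; [|lra].
    apply (Rmult_le_reg_r (/ s)); [apply Rinv_0_lt_compat, Hs|]. field_simplify; lra. }
  assert (0 <= lam / Lr) by (apply Rdiv_le_0_compat; lra).
  nra.
Qed.
End FamilyBounds.

Lemma tau_tilde_origin (H : R * R -> R) : tau_tilde H (0, 0) = 1 / 2.
Proof.
  unfold tau_tilde; simpl. destruct (Req_EM_T 0 0) as [_|n]; [reflexivity|contradiction].
Qed.

Lemma tau_tilde_off_origin (H : R * R -> R) (p : R * R) :
  p <> (0, 0) -> tau_tilde H p = H p / inv_hess_quad H p.
Proof.
  intros Hp. destruct p as [p1 p2]. unfold tau_tilde; simpl.
  destruct (Req_EM_T p1 0), (Req_EM_T p2 0); subst; try reflexivity. contradiction.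
Qed.

Lemma convex1_on_powr_line (f : R * R -> R) (r gam d : R) (p w : R * R) :
  convex_on (sublev_le f r) (fun q => powr (f q) gam) ->
  (forall t, 0 <= t < d -> 0 < f (line p w t) <= r) ->
  convex1_on (fun t => 0 <= t < d) (fun t => exp (gam * ln (f (line p w t)))).
Proof.
  intros Hcvx Hin s t th Hs Ht Hth.
  assert (Hpowr : forall u, 0 <= u < d -> powr (f (line p w u)) gam
                                          = exp (gam * ln (f (line p w u)))).
  { intros u Hu. unfold powr, Rpower.
    destruct (Rlt_dec 0 (f (line p w u))) as [_|Hn]; [reflexivity|].
    exfalso. apply Hn, Hin, Hu. }
  assert (Hmid : 0 <= th * s + (1 - th) * t < d).
  { split; [|apply convex_comb_lt; tauto].
    apply Rplus_le_le_0_compat; apply Rmult_le_pos; lra. }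
  assert (Hsub : forall u, 0 <= u < d -> sublev_le f r (line p w u))
    by (intros u Hu; destruct (Hin u Hu); split; lra).
  rewrite <- !Hpowr by assumption. rewrite <- comb_line. apply Hcvx; auto.
Qed.

Section Assumptions.
Variable H : R * R -> R.
Hypothesis HC2 : C2 H.
Hypothesis HH1 : H1 H.
Hypothesis HH2 : H2 H.

Lemma H_nonneg (p : R * R) : 0 <= H p.
Proof. apply HH2. Qed.

Lemma H_origin : H (0, 0) = 0.
Proof. apply HH2. Qed.

Lemma strongly_convex_on_disc (M : R) :
  exists lam, 0 < lam /\ convex_on (disc M) (fun p => H p - lam / 2 * sqn p).
Proof. apply HH1; [apply disc_bounded|apply disc_convex]. Qed.

Lemma strongly_convex_segment (U : R * R -> Prop) (lam s : R) (p : R * R) :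
  U p -> U (0, 0) -> convex_on U (fun q => H q - lam / 2 * sqn q) -> 0 <= s <= 1 ->
  H (line (0, 0) p s) <= s * (H p - lam / 2 * sqn p) + lam / 2 * s ^ 2 * sqn p.
Proof.
  intros Hp HU0 Hc Hs.
  pose proof (Hc p (0, 0) s Hp HU0 Hs) as C. simpl in C.
  rewrite comb_origin, sqn_line_origin, H_origin, sqn_origin in C. lra.
Qed.

Lemma H_ge_of_strongly_convex (U : R * R -> Prop) (lam : R) (p : R * R) :
  U p -> U (0, 0) -> convex_on U (fun q => H q - lam / 2 * sqn q) ->
  lam / 2 * sqn p <= H p.
Proof.
  intros Hp HU0 Hc.
  assert (0 <= H p - lam / 2 * sqn p); [|lra].
  apply (nonneg_of_forall_small _ (lam / 2 * sqn p)). intros s Hs.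
  pose proof (strongly_convex_segment U lam s p Hp HU0 Hc ltac:(lra)).
  pose proof (H_nonneg (line (0, 0) p s)).
  apply (Rmult_le_reg_l s); [lra|]. nra.
Qed.

Lemma H_line_origin_le (p : R * R) (s : R) : 0 <= s <= 1 -> H (line (0, 0) p s) <= s * H p.
Proof.
  intros Hs. destruct (strongly_convex_on_disc (sqn p)) as [lam [Hlam Hc]].
  assert (Hdisc0 : disc (sqn p) (0, 0)) by (unfold disc; rewrite sqn_origin; apply sqn_nonneg).
  pose proof (strongly_convex_segment _ lam s p (Rle_refl _) Hdisc0 Hc Hs).
  pose proof (sqn_nonneg p).
  assert (0 <= lam / 2 * s * (1 - s) * sqn p) by (repeat apply Rmult_le_pos; lra).
  nra.
Qed.

Lemma H_pos (p : R * R) : p <> (0, 0) -> 0 < H p.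
Proof.
  intros Hp. destruct (strongly_convex_on_disc (sqn p)) as [lam [Hlam Hc]].
  assert (Hdisc0 : disc (sqn p) (0, 0)) by (unfold disc; rewrite sqn_origin; apply sqn_nonneg).
  pose proof (H_ge_of_strongly_convex _ lam p (Rle_refl _) Hdisc0 Hc).
  pose proof (sqn_pos p Hp). nra.
Qed.

Lemma hess_form_ge_of_convex_disc (M lam : R) (x v : R * R) :
  convex_on (disc M) (fun p => H p - lam / 2 * sqn p) -> sqn x < M ->
  lam * sqn v <= hess_form H x v v.
Proof.
  intros Hc Hx.
  apply (convex_on_ext _ _ (fun p => - (lam / 2) * sqn p + 1 * H p)) in Hc; [|intros; ring].
  pose proof (hess_form_nonneg_of_convex H HC2 _ _ _ x v Hc (line_near_disc M x v Hx)).
  lra.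
Qed.

Lemma hess_coercive (x : R * R) : exists lam, 0 < lam /\ forall v1 v2,
  lam * (v1 ^ 2 + v2 ^ 2) <= qform (hxx H x) (hxy H x) (hyy H x) v1 v2.
Proof.
  destruct (strongly_convex_on_disc (sqn x + 1)) as [lam [Hlam Hc]].
  exists lam. split; [exact Hlam|]. intros v1 v2.
  pose proof (hess_form_ge_of_convex_disc _ lam x (v1, v2) Hc ltac:(lra)) as Hv.
  rewrite hess_form_qform in Hv. exact Hv.
Qed.

Lemma hess_form_nonneg (x v : R * R) : 0 <= hess_form H x v v.
Proof.
  destruct (strongly_convex_on_disc (sqn x + 1)) as [lam [Hlam Hc]].
  pose proof (sqn_nonneg v). pose proof (hess_form_ge_of_convex_disc _ lam x v Hc ltac:(lra)).
  nra.
Qed.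

Lemma hess_det_pos (x : R * R) : 0 < hess_det H x.
Proof. destruct (hess_coercive x) as [lam [Hlam Hq]]. exact (qform_det_pos _ _ _ lam Hlam Hq). Qed.

Lemma grad_dot_origin_nonneg (v : R * R) : 0 <= grad_dot H (0, 0) v.
Proof.
  pose proof (is_derive_opp _ _ _ (is_derive_C2_line H HC2 (0, 0) v 0)) as D.
  rewrite line_at_0 in D.
  assert (- grad_dot H (0, 0) v <= 0); [|lra].
  apply (derive_le_of_slope_le _ _ 0 1 D Rlt_0_1). intros t _.
  rewrite line_at_0, H_origin. pose proof (H_nonneg (line (0, 0) v t)). unfold opp; simpl. lra.
Qed.

Lemma grad_origin : pd1 H (0, 0) = 0 /\ pd2 H (0, 0) = 0.
Proof.
  pose proof (grad_dot_origin_nonneg (1, 0)). pose proof (grad_dot_origin_nonneg (-1, 0)).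
  pose proof (grad_dot_origin_nonneg (0, 1)). pose proof (grad_dot_origin_nonneg (0, -1)).
  unfold grad_dot in *; simpl in *. split; lra.
Qed.

(* Tangent inequality for [H - lam/2 |.|^2] from [q] to [0]:
   [<DH(q), q> >= H q + lam/2 |q|^2]. *)
Lemma grad_dot_self_pos (q : R * R) : q <> (0, 0) -> 0 < grad_dot H q q.
Proof.
  intros Hq. pose proof (sqn_pos q Hq).
  destruct (strongly_convex_on_disc (sqn q)) as [lam [Hlam Hc]].
  set (k := fun t => 1 * H (line (0, 0) q t) + (- (lam / 2)) * sqn (line (0, 0) q t)).
  assert (Hk : convex1_on (fun t => disc (sqn q) (line (0, 0) q t)) k).
  { apply (convex_on_ext _ _ (fun p => 1 * H p + (- (lam / 2)) * sqn p)) in Hc;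
      [|intros; ring].
    intros s t th Hs Ht Hth. unfold k. rewrite <- comb_line. apply Hc; assumption. }
  pose proof (is_derive_lincomb _ _ 1 1 (- (lam / 2)) _ _ (is_derive_C2_line H HC2 (0, 0) q 1)
                (is_derive_sqn_line (0, 0) q 1)) as Dk.
  assert (I1 : disc (sqn q) (line (0, 0) q 1)) by (rewrite line_origin_at_1; apply Rle_refl).
  assert (I0 : disc (sqn q) (line (0, 0) q 0)).
  { rewrite line_at_0. unfold disc. rewrite sqn_origin. apply sqn_nonneg. }
  pose proof (convex1_tangent_le _ k 1 0 _ Hk I1 I0 Dk) as T.
  unfold k in T. rewrite line_at_0, line_origin_at_1, H_origin, sqn_origin in T.
  replace ((fst (0, 0) + 1 * fst q) * fst q + (snd (0, 0) + 1 * snd q) * snd q)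
    with (sqn q) in T by (unfold sqn; simpl; ring).
  pose proof (H_nonneg q). nra.
Qed.

Lemma inv_hess_quad_eq (p : R * R) : inv_hess_quad H p = adj_hess_quad H p / hess_det H p.
Proof.
  unfold inv_hess_quad, adj_hess_quad, adj_qform, hess_det.
  rewrite (C2_schwarz H HC2). cbv zeta. f_equal; ring.
Qed.

Lemma adj_hess_quad_pos (p : R * R) : p <> (0, 0) -> 0 < adj_hess_quad H p.
Proof.
  intros Hp. destruct (hess_coercive p) as [lam [Hlam Hq]].
  apply (adj_qform_pos _ _ _ lam Hlam Hq). intros E. injection E as E1 E2.
  pose proof (grad_dot_self_pos p Hp) as G. unfold grad_dot in G. rewrite E1, E2 in G. lra.
Qed.

Lemma inv_hess_quad_pos (p : R * R) : p <> (0, 0) -> 0 < inv_hess_quad H p.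
Proof.
  intros Hp. rewrite inv_hess_quad_eq.
  apply Rdiv_lt_0_compat; [apply adj_hess_quad_pos, Hp|apply hess_det_pos].
Qed.

Lemma line_near_sublev (c : R) (x v : R * R) :
  H x < c -> exists d, 0 < d /\ forall t, 0 <= t < d -> sublev_lt H c (line x v t).
Proof.
  intros Hx.
  destruct (continuous_near_between (fun t => H (line x v t)) 0 (H x - 1) c) as [d [Hd Hnear]].
  - eapply is_derive_continuous, is_derive_C2_line, HC2.
  - rewrite line_at_0. lra.
  - exists d. split; [exact Hd|]. intros t Ht. split; [apply H_nonneg|].
    apply Hnear. rewrite Rminus_0_r, Rabs_pos_eq; lra.
Qed.

Lemma hess_form_ge_of_convex (c l : R) (x v : R * R) : H x < c ->
  convex_on (sublev_lt H c) (fun q => H q - l / 2 * sqn q) -> l * sqn v <= hess_form H x v v.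
Proof.
  intros Hx Hc.
  apply (convex_on_ext _ _ (fun q => - (l / 2) * sqn q + 1 * H q)) in Hc; [|intros; ring].
  pose proof (hess_form_nonneg_of_convex H HC2 _ _ _ x v Hc (line_near_sublev c x v Hx)).
  lra.
Qed.

Lemma hess_form_le_of_concave (c L : R) (x v : R * R) : H x < c ->
  convex_on (sublev_lt H c) (fun q => L / 2 * sqn q - H q) -> hess_form H x v v <= L * sqn v.
Proof.
  intros Hx Hc.
  apply (convex_on_ext _ _ (fun q => L / 2 * sqn q + (-1) * H q)) in Hc; [|intros; ring].
  pose proof (hess_form_nonneg_of_convex H HC2 _ _ _ x v Hc (line_near_sublev c x v Hx)).
  lra.
Qed.
(* Mean value theorem for [t |-> <DH(t p), DH(p)>], then Cauchy-Schwarz for the Hessian. *)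
Lemma grad_sq_le_of_concave (c L : R) (p : R * R) : H p < c ->
  convex_on (sublev_lt H c) (fun q => L / 2 * sqn q - H q) ->
  pd1 H p ^ 2 + pd2 H p ^ 2 <= L ^ 2 * sqn p.
Proof.
  intros Hp Hc. set (g := (pd1 H p, pd2 H p)).
  destruct (MVT_gen (fun t => grad_dot H (line (0, 0) p t) g) 0 1
              (fun t => hess_form H (line (0, 0) p t) p g)) as [t [Ht Emvt]].
  - intros t _. apply is_derive_grad_dot_line, HC2.
  - intros t _. apply continuity_pt_filterlim.
    eapply is_derive_continuous, is_derive_grad_dot_line, HC2.
  - rewrite Rmin_left, Rmax_right in Ht by lra.
    rewrite line_at_0, line_origin_at_1 in Emvt.
    destruct grad_origin as [G1 G2].
    set (x := line (0, 0) p t) in *.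
    assert (Hx : H x < c).
    { pose proof (H_line_origin_le p t Ht) as Hle. fold x in Hle.
      assert (0 <= H p * (1 - t)) by (apply Rmult_le_pos; [apply H_nonneg|lra]). nra. }
    assert (Eg : sqn g = hess_form H x p g).
    { unfold grad_dot in Emvt. rewrite G1, G2 in Emvt. unfold sqn, g in *; simpl in *. lra. }
    pose proof (hess_form_sq_le H x p g (Rlt_le _ _ (hess_det_pos x))) as CS.
    pose proof (hess_form_le_of_concave c L x p Hx Hc).
    pose proof (hess_form_le_of_concave c L x g Hx Hc).
    pose proof (sqn_nonneg p). pose proof (sqn_nonneg g).
    rewrite <- Eg in CS.
    change (pd1 H p ^ 2 + pd2 H p ^ 2) with (sqn g).
    destruct (Rle_lt_or_eq_dec 0 (sqn g) (sqn_nonneg g)) as [Hg|<-]; [|nra].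
    apply (Rmult_le_reg_l (sqn g)); [exact Hg|].
    apply Rle_trans with (hess_form H x p p * hess_form H x g g); [nra|].
    replace (sqn g * (L ^ 2 * sqn p)) with ((L * sqn p) * (L * sqn g)) by ring.
    apply Rmult_le_compat; auto using hess_form_nonneg.
Qed.

Lemma tau_tilde_ge_of_convexity_bounds (e1 e2 l L : R) (p : R * R) :
  p <> (0, 0) -> 0 < e1 -> 0 < e2 -> 0 < l -> 0 < L ->
  convex_on (sublev_lt H (H p + e1)) (fun q => H q - l / 2 * sqn q) ->
  convex_on (sublev_lt H (H p + e2)) (fun q => L / 2 * sqn q - H q) ->
  1 / 2 * (l / L) ^ 2 <= tau_tilde H p.
Proof.
  intros Hp He1 He2 Hl HL Hcvx Hccv.
  assert (HHp : l / 2 * sqn p <= H p).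
  { apply (H_ge_of_strongly_convex (sublev_lt H (H p + e1)) l p); [| |exact Hcvx].
    - split; [apply H_nonneg|lra].
    - unfold sublev_lt. rewrite H_origin. pose proof (H_nonneg p). split; lra. }
  assert (Hcoer : forall v1 v2,
             l * (v1 ^ 2 + v2 ^ 2) <= qform (hxx H p) (hxy H p) (hyy H p) v1 v2).
  { intros v1 v2. rewrite <- hess_form_qform.
    apply (hess_form_ge_of_convex (H p + e1) l p (v1, v2)); [lra|exact Hcvx]. }
  pose proof (adj_qform_div_det_le _ _ _ l Hl Hcoer (pd1 H p) (pd2 H p)) as Hadj.
  pose proof (grad_sq_le_of_concave (H p + e2) L p ltac:(lra) Hccv) as Hgrad.
  pose proof (inv_hess_quad_pos p Hp) as Hq.
  assert (Hquad : inv_hess_quad H p <= L ^ 2 * sqn p / l).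
  { rewrite inv_hess_quad_eq. unfold adj_hess_quad, hess_det.
    eapply Rle_trans; [exact Hadj|]. apply Rmult_le_compat_r; [|exact Hgrad].
    left. apply Rinv_0_lt_compat, Hl. }
  rewrite (tau_tilde_off_origin H p Hp).
  apply (Rmult_le_reg_r (inv_hess_quad H p)); [exact Hq|].
  replace (H p / inv_hess_quad H p * inv_hess_quad H p) with (H p) by (field; lra).
  apply Rle_trans with (1 / 2 * (l / L) ^ 2 * (L ^ 2 * sqn p / l)).
  - apply Rmult_le_compat_l; [|exact Hquad]. apply Rmult_le_pos; [lra|apply pow2_ge_0].
  - replace (1 / 2 * (l / L) ^ 2 * (L ^ 2 * sqn p / l)) with (l / 2 * sqn p)
      by (field; lra). exact HHp.
Qed.

Lemma tau_tilde_pos (p : R * R) : p <> (0, 0) -> 0 < tau_tilde H p.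
Proof.
  intros Hp. rewrite (tau_tilde_off_origin H p Hp).
  apply Rdiv_lt_0_compat; [apply H_pos, Hp|apply inv_hess_quad_pos, Hp].
Qed.

Lemma tau_tilde_ge_lambda_ratio (p : R * R) : p <> (0, 0) ->
  tau_tilde H p >= 1 / 2 * (real (lambda_H H (H p)) / real (Lambda_H H (H p))) ^ 2.
Proof.
  intros Hp. apply Rle_ge. unfold lambda_H, Lambda_H.
  apply half_sq_real_ratio_le; [apply tau_tilde_pos, Hp| | |].
  - intros e l [Hl _]. exact Hl.
  - intros e L [HL _]. exact HL.
  - intros e1 e2 l L He1 He2 [Hl Hcvx] [HL Hccv].
    exact (tau_tilde_ge_of_convexity_bounds e1 e2 l L p Hp He1 He2 Hl HL Hcvx Hccv).
Qed.

Lemma continuous_adj_hess_quad (p : R * R) : continuous (adj_hess_quad H) p.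
Proof.
  pose proof (C2_continuous_hxx H HC2 p). pose proof (C2_continuous_hxy H HC2 p).
  pose proof (C2_continuous_hyy H HC2 p).
  pose proof (C2_continuous_pd1 H HC2 p). pose proof (C2_continuous_pd2 H HC2 p).
  unfold adj_hess_quad, adj_qform.
  apply continuous_add; [apply continuous_sub|];
    [| |apply continuous_mul; auto using continuous_sq].
  - apply continuous_mul; auto using continuous_sq.
  - apply continuous_mul; [apply continuous_mul; [apply continuous_mul|]|];
      solve [assumption | apply continuous_const].
Qed.

Lemma continuous_hess_det (p : R * R) : continuous (hess_det H) p.
Proof.
  pose proof (C2_continuous_hxx H HC2 p). pose proof (C2_continuous_hxy H HC2 p).
  pose proof (C2_continuous_hyy H HC2 p).
  unfold hess_det. apply continuous_sub; apply continuous_mul; assumption.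
Qed.

Lemma tau_tilde_continuous_off_origin (p : R * R) : p <> (0, 0) -> continuous (tau_tilde H) p.
Proof.
  intros Hp.
  apply (continuous_ext_loc _ (fun q => H q / (adj_hess_quad H q / hess_det H q))).
  - generalize (locally_neq_origin p Hp). apply filter_imp. intros q Hq.
    rewrite (tau_tilde_off_origin H q Hq), inv_hess_quad_eq. reflexivity.
  - pose proof (hess_det_pos p). pose proof (adj_hess_quad_pos p Hp).
    apply continuous_div; [apply C2_continuous, HC2| |].
    + apply continuous_div; [apply continuous_adj_hess_quad|apply continuous_hess_det|lra].
    + apply Rgt_not_eq, Rdiv_lt_0_compat; assumption.
Qed.

Lemma grad_dot_adj_grad (p : R * R) : grad_dot H p (adj_grad H p) = adj_hess_quad H p.
Proof. unfold grad_dot, adj_grad, adj_hess_quad, adj_qform; simpl. ring. Qed.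

Lemma hess_form_adj_grad (p : R * R) :
  hess_form H p (adj_grad H p) (adj_grad H p) = hess_det H p * adj_hess_quad H p.
Proof. unfold hess_form, adj_grad, hess_det, adj_hess_quad, adj_qform; simpl. ring. Qed.

(* Second-order convexity of [H ^ gam] along [p + t adj(D^2H(p)) DH(p)]. *)
Lemma tau_tilde_ge_of_powr_convex_interior (gam r : R) (p : R * R) :
  p <> (0, 0) -> 0 < gam -> H p < r ->
  convex_on (sublev_le H r) (fun q => powr (H q) gam) -> 1 - gam <= tau_tilde H p.
Proof.
  intros Hp Hgam Hpr Hcvx.
  set (w := adj_grad H p).
  destruct (continuous_near_between (fun t => H (line p w t)) 0 0 r) as [d [Hd Hnear]].
  - eapply is_derive_continuous, is_derive_C2_line, HC2.
  - rewrite line_at_0. split; [apply H_pos, Hp|exact Hpr].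
  - assert (Hin : forall t, 0 <= t < d -> 0 < H (line p w t) < r).
    { intros t Ht. apply Hnear. rewrite Rminus_0_r, Rabs_pos_eq; lra. }
    pose proof (convex_pow_second_order (fun t => H (line p w t))
                  (fun t => grad_dot H (line p w t) w) (hess_form H p w w) gam d Hgam Hd)
      as Hsecond.
    cbv beta in Hsecond. rewrite line_at_0, grad_dot_adj_grad, hess_form_adj_grad in Hsecond.
    rewrite (tau_tilde_off_origin H p Hp), inv_hess_quad_eq.
    apply one_sub_le_ratio_of_second_order;
      [apply adj_hess_quad_pos, Hp|apply hess_det_pos|apply Hsecond].
    + intros t Ht. apply Hin, Ht.
    + intros t _. apply is_derive_C2_line, HC2.
    + pose proof (is_derive_grad_dot_line H HC2 p w w 0) as D.
      rewrite line_at_0, hess_form_adj_grad in D. exact D.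
    + apply (convex1_on_powr_line H r gam d p w Hcvx).
      intros t Ht. pose proof (Hin t Ht). lra.
Qed.

Lemma tau_tilde_ge_of_powr_convex (gam r : R) (p : R * R) :
  1 / 2 <= gam -> convex_on (sublev_le H r) (fun q => powr (H q) gam) ->
  sublev_le H r p -> 1 - gam <= tau_tilde H p.
Proof.
  intros Hgam Hcvx [_ Hpr].
  destruct (classic (p = (0, 0))) as [->|Hp]; [rewrite tau_tilde_origin; lra|].
  destruct (Rlt_or_le (H p) r) as [Hlt|Hge];
    [exact (tau_tilde_ge_of_powr_convex_interior gam r p Hp ltac:(lra) Hlt Hcvx)|].
  assert (Hcont : continuous (fun s => tau_tilde H (line (0, 0) p s)) 1).
  { apply (continuous_comp (line (0, 0) p) (tau_tilde H) 1); [apply continuous_line|].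
    rewrite line_origin_at_1. apply tau_tilde_continuous_off_origin, Hp. }
  destruct (Rle_or_lt (1 - gam) (tau_tilde H p)) as [|Hbad]; [assumption|exfalso].
  destruct (continuous_near_between _ 1 (tau_tilde H p - 1) (1 - gam) Hcont)
    as [d [Hd Hnear]]; [rewrite line_origin_at_1; lra|].
  set (s := Rmax (1 / 2) (1 - d / 2)).
  assert (Hs : 1 / 2 <= s < 1 /\ 1 - d / 2 <= s).
  { pose proof (Rmax_l (1 / 2) (1 - d / 2)). pose proof (Rmax_r (1 / 2) (1 - d / 2)).
    split; [split; [assumption|apply Rmax_lub_lt; lra]|assumption]. }
  pose proof (line_origin_neq p s Hp ltac:(lra)) as Hsp.
  pose proof (H_line_origin_le p s ltac:(lra)). pose proof (H_pos p Hp).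
  assert (1 - gam <= tau_tilde H (line (0, 0) p s)).
  { apply (tau_tilde_ge_of_powr_convex_interior gam r); [exact Hsp|lra|nra|exact Hcvx]. }
  assert (tau_tilde H (line (0, 0) p s) < 1 - gam); [|lra].
  apply Hnear. rewrite Rabs_left1; lra.
Qed.

Section NearOrigin.
Variables (e : R) (q : R * R).
Hypothesis Hclose : forall t, 0 <= t <= 1 -> hess_close H e (line (0, 0) q t) (0, 0).

Lemma twice_H_near_hess_origin :
  Rabs (2 * H q - hess_form H (0, 0) q q) <= 4 * e * sqn q.
Proof.
  set (Q0 := hess_form H (0, 0) q q).
  pose proof (taylor2_abs_le (fun t => H (line (0, 0) q t) - t ^ 2 / 2 * Q0)
                (fun t => grad_dot H (line (0, 0) q t) q - t * Q0)
                (fun t => hess_form H (line (0, 0) q t) q q - Q0) (2 * e * sqn q)) as Htaylor.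
  cbv beta in Htaylor. rewrite line_at_0, line_origin_at_1, H_origin in Htaylor.
  replace (2 * H q - Q0) with (2 * (H q - 1 ^ 2 / 2 * Q0 - (0 - 0 ^ 2 / 2 * Q0))) by field.
  rewrite Rabs_mult, (Rabs_pos_eq 2) by lra.
  enough (Rabs (H q - 1 ^ 2 / 2 * Q0 - (0 - 0 ^ 2 / 2 * Q0)) <= 2 * e * sqn q) by lra.
  apply Htaylor.
  - intros t _. apply is_derive_sub; [apply is_derive_C2_line, HC2|].
    auto_derive; [exact I|field].
  - intros t _. apply is_derive_sub; [apply is_derive_grad_dot_line, HC2|].
    auto_derive; [exact I|ring].
  - destruct grad_origin as [G1 G2]. unfold grad_dot. rewrite G1, G2. ring.
  - intros t Ht. destruct (Hclose t Ht) as (Ha & Hb & Hd). destruct q as [q1 q2].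
    unfold Q0. rewrite !hess_form_qform. apply qform_sub_abs_le; assumption.
Qed.

Lemma grad_remainder_sq_le :
  (pd1 H q - (hxx H q * fst q + hxy H q * snd q)) ^ 2
  + (pd2 H q - (hxy H q * fst q + hyy H q * snd q)) ^ 2 <= 16 * e ^ 2 * sqn q.
Proof.
  destruct grad_origin as [G1 G2].
  pose proof (Hclose 1 ltac:(lra)) as (Ha1 & Hb1 & Hd1). rewrite line_origin_at_1 in *.
  assert (R1 : Rabs (pd1 H q - pd1 H (0, 0) - (hxx H q * fst q + hxy H q * snd q))
               <= 2 * e * (Rabs (fst q) + Rabs (snd q))).
  { apply abs_sub_linear_le_of_grad_close; [intros; apply C2_differentiable_pd1, HC2|].
    intros t Ht. destruct (Hclose t Ht) as (Ha & Hb & Hd).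
    split; eapply abs_sub_le_of_close; eassumption. }
  assert (R2 : Rabs (pd2 H q - pd2 H (0, 0) - (hxy H q * fst q + hyy H q * snd q))
               <= 2 * e * (Rabs (fst q) + Rabs (snd q))).
  { apply abs_sub_linear_le_of_grad_close; [intros; apply C2_differentiable_pd2, HC2|].
    intros t Ht. destruct (Hclose t Ht) as (Ha & Hb & Hd). rewrite !(C2_schwarz H HC2).
    split; eapply abs_sub_le_of_close; eassumption. }
  rewrite G1, Rminus_0_r in R1. rewrite G2, Rminus_0_r in R2.
  apply sq_le_of_abs_le_sum in R1, R2. unfold sqn. nra.
Qed.

Lemma inv_hess_quad_near_twice_H (M lam : R) : 0 < e <= 1 -> 0 < lam ->
  convex_on (disc M) (fun p => H p - lam / 2 * sqn p) -> sqn q < M ->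
  Rabs (inv_hess_quad H q - 2 * H q) <= (23 + 16 / lam) * e * sqn q.
Proof.
  intros He Hlam Hc HqM.
  assert (Hcoer : forall v1 v2,
             lam * (v1 ^ 2 + v2 ^ 2) <= qform (hxx H q) (hxy H q) (hyy H q) v1 v2).
  { intros v1 v2. rewrite <- hess_form_qform.
    exact (hess_form_ge_of_convex_disc M lam q (v1, v2) Hc HqM). }
  pose proof (Hclose 1 ltac:(lra)) as (Ha & Hb & Hd). rewrite line_origin_at_1 in Ha, Hb, Hd.
  pose proof twice_H_near_hess_origin as Htaylor.
  pose proof grad_remainder_sq_le as Hrem.
  destruct q as [q1 q2]. rewrite hess_form_qform in Htaylor. unfold sqn in *; simpl in *.
  rewrite inv_hess_quad_eq. unfold adj_hess_quad, hess_det.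
  set (r1 := pd1 H (q1, q2) - (hxx H (q1, q2) * q1 + hxy H (q1, q2) * q2)) in *.
  set (r2 := pd2 H (q1, q2) - (hxy H (q1, q2) * q1 + hyy H (q1, q2) * q2)) in *.
  replace (pd1 H (q1, q2)) with (hxx H (q1, q2) * q1 + hxy H (q1, q2) * q2 + r1)
    by (unfold r1; ring).
  replace (pd2 H (q1, q2)) with (hxy H (q1, q2) * q1 + hyy H (q1, q2) * q2 + r2)
    by (unfold r2; ring).
  exact (adj_qform_perturbed_close _ _ _ _ _ _ q1 q2 r1 r2 (H (q1, q2)) e lam
           He Hlam Hcoer Ha Hb Hd Htaylor Hrem).
Qed.

Lemma tau_tilde_near_half (M lam : R) : 0 < e <= 1 -> 0 < lam ->
  convex_on (disc M) (fun p => H p - lam / 2 * sqn p) -> sqn q < M -> q <> (0, 0) ->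
  (23 + 16 / lam) * e <= lam / 2 ->
  Rabs (tau_tilde H q - 1 / 2) <= (23 + 16 / lam) * e / lam.
Proof.
  intros He Hlam Hc HqM Hq Hsmall.
  pose proof (inv_hess_quad_near_twice_H M lam He Hlam Hc HqM) as Hquad.
  assert (HHq : lam / 2 * sqn q <= H q).
  { apply (H_ge_of_strongly_convex (disc M) lam q); [unfold disc; lra| |exact Hc].
    unfold disc. rewrite sqn_origin. pose proof (sqn_nonneg q). lra. }
  rewrite (tau_tilde_off_origin H q Hq).
  apply half_ratio_close; [apply H_pos, Hq|apply Rle_div_l; lra|].
  apply (Rle_trans _ _ _ Hquad).
  replace (2 * ((23 + 16 / lam) * e / lam) * H q)
    with ((23 + 16 / lam) * e * (2 / lam * H q)) by (field; lra).
  apply Rmult_le_compat_l; [pose proof (Rdiv_lt_0_compat 16 lam ltac:(lra) Hlam); nra|].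
  apply (Rmult_le_reg_l (lam / 2)); [lra|]. field_simplify; lra.
Qed.
End NearOrigin.

Lemma hess_close_near_origin (e : R) : 0 < e -> exists d, 0 < d /\
  forall q, Rabs (fst q) < d -> Rabs (snd q) < d ->
  forall t, 0 <= t <= 1 -> hess_close H e (line (0, 0) q t) (0, 0).
Proof.
  intros He.
  destruct (continuous_box _ (0, 0) e (C2_continuous_hxx H HC2 (0, 0)) He) as [da [Hda Ca]].
  destruct (continuous_box _ (0, 0) e (C2_continuous_hxy H HC2 (0, 0)) He) as [db [Hdb Cb]].
  destruct (continuous_box _ (0, 0) e (C2_continuous_hyy H HC2 (0, 0)) He) as [dd [Hdd Cd]].
  destruct (Rmin_pos_bounds db dd) as (Hbd & Hbd1 & Hbd2); [assumption..|].
  destruct (Rmin_pos_bounds da (Rmin db dd)) as (Hd & Hd1 & Hd2); [assumption..|].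
  exists (Rmin da (Rmin db dd)). split; [exact Hd|].
  intros [q1 q2] Hq1 Hq2 t Ht. simpl in Hq1, Hq2.
  assert (Hline : Rabs (t * q1) <= Rabs q1 /\ Rabs (t * q2) <= Rabs q2).
  { rewrite !Rabs_mult, (Rabs_pos_eq t) by lra.
    pose proof (Rabs_pos q1). pose proof (Rabs_pos q2). split; nra. }
  unfold line; simpl. rewrite !Rplus_0_l.
  split; [|split]; apply Rlt_le; [apply Ca|apply Cb|apply Cd]; simpl; rewrite Rminus_0_r; lra.
Qed.

(* Near the origin, [2 H] and [<[D^2H]^{-1} DH, DH>] both agree with the Hessian form at [0]
   up to [O(e |q|^2)], while [2 H q >= lam |q|^2]. *)
Lemma tau_tilde_continuous_origin : continuous (tau_tilde H) (0, 0).
Proof.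
  destruct (strongly_convex_on_disc 2) as [lam [Hlam Hc]].
  apply filterlim_locally. intros [eps Heps]. simpl.
  set (K := 23 + 16 / lam).
  assert (HK : 0 < K) by (unfold K; pose proof (Rdiv_lt_0_compat 16 lam ltac:(lra) Hlam); lra).
  destruct (Rmin_pos_bounds (1 / 2) (eps / 2)) as (Heta & Heta1 & Heta2); [lra|lra|].
  set (eta := Rmin (1 / 2) (eps / 2)) in *.
  destruct (Rmin_pos_bounds 1 (lam * eta / K)) as (He & He1 & HeK); [lra| |].
  { apply Rdiv_lt_0_compat; [apply Rmult_lt_0_compat|]; assumption. }
  set (e := Rmin 1 (lam * eta / K)) in *.
  apply (Rmult_le_compat_l K) in HeK; [|lra].
  replace (K * (lam * eta / K)) with (lam * eta) in HeK by (field; lra).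
  destruct (hess_close_near_origin e He) as [d [Hd Hclose]].
  destruct (Rmin_pos_bounds d (1 / 2)) as (Hd' & Hd1 & Hd2); [lra|lra|].
  exists (mkposreal _ Hd'). intros [q1 q2] [B1 B2].
  change (Rabs (q1 - 0) < Rmin d (1 / 2)) in B1. change (Rabs (q2 - 0) < Rmin d (1 / 2)) in B2.
  rewrite Rminus_0_r in B1, B2.
  change (Rabs (tau_tilde H (q1, q2) - tau_tilde H (0, 0)) < eps). rewrite tau_tilde_origin.
  destruct (classic ((q1, q2) = (0, 0))) as [->|Hq];
    [rewrite tau_tilde_origin, Rminus_diag, Rabs_R0; exact Heps|].
  assert (Hsqn : sqn (q1, q2) < 2).
  { unfold sqn; cbn [fst snd]. rewrite <- (pow2_abs q1), <- (pow2_abs q2).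
    pose proof (Rabs_pos q1). pose proof (Rabs_pos q2). nra. }
  eapply Rle_lt_trans.
  - apply (tau_tilde_near_half e (q1, q2) (Hclose (q1, q2) ltac:(simpl; lra) ltac:(simpl; lra))
             2 lam (conj He He1) Hlam Hc Hsqn Hq). fold K. nra.
  - fold K. apply (Rmult_lt_reg_r lam); [exact Hlam|]. field_simplify; nra.
Qed.

Lemma tau_tilde_continuous (p : R * R) : continuous (tau_tilde H) p.
Proof.
  destruct (classic (p = (0, 0))) as [->|Hp];
    [apply tau_tilde_continuous_origin|apply tau_tilde_continuous_off_origin, Hp].
Qed.
End Assumptions.

Theorem lemmaA2 (H : R * R -> R) :
  C2 H -> H1 H -> H2 H ->
  ((forall p, continuous (tau_tilde H) p) /\
   tau_tilde H (0, 0) = 1 / 2 /\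
   (forall p, p <> (0, 0) ->
      tau_tilde H p >= 1 / 2 *
        (real (lambda_H H (H p)) / real (Lambda_H H (H p))) ^ 2)) /\
  (forall (gam r : R), 1 / 2 <= gam < 1 -> 0 < r ->
     convex_on (sublev_le H r) (fun p => powr (H p) gam) ->
     forall p, sublev_le H r p -> tau_tilde H p >= 1 - gam).
Proof.
  intros HC2 HH1 HH2. split; [split; [|split]|].
  - exact (tau_tilde_continuous H HC2 HH1 HH2).
  - exact (tau_tilde_origin H).
  - exact (tau_tilde_ge_lambda_ratio H HC2 HH1 HH2).
  - intros gam r Hgam _ Hcvx p Hp.
    exact (Rle_ge _ _ (tau_tilde_ge_of_powr_convex H HC2 HH1 HH2 gam r p (proj1 Hgam) Hcvx Hp)).
Qed.
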